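(* Let $m\ge1$ and $0\le q\le m(m-1)/2$ be integers. (i) If a sequence $(\mu^{(n)})\subset\mathcal H^{\rm loc}_{q,m}$ converges algebraically to $\mu^{(\infty)}\in\mathcal H^{\rm loc}_m$, then it converges infinitesimally to $\mu^{(\infty)}$. (ii) The converse of (i) is false: there exist sequences in $\mathcal H^{\rm loc}_{q,m}$ (for suitable $q,m$) which converge infinitesimally to some $\mu^{(\infty)}\in\mathcal H^{\rm loc}_m$ but do not converge algebraically to it.
   Context: Notation. For $0\le q\le m(m-1)/2$ write $\mathbb R^{q+m}=\mathbb R^q\oplus\mathbb R^m$ with standard inner product $\langle\cdot,\cdot\rangle_{\rm st}$ on $\mathbb R^m$. Let $\mathcal V_{q,m}$ be the quotient of the space $\Lambda^2(\mathbb R^{q+m})^*\otimes\mathbb R^{q+m}$ of skew-symmetric brackets on $\mathbb R^{q+m}$ by the change-of-basis action of $\mathrm{GL}(q)\times\mathrm O(m)$ (block-diagonal in $\mathrm{GL}(q+m)$), with the quotient (''standard'') topology. $\mathcal H^{\rm loc}_{q,m}\subset\mathcal V_{q,m}$ is the set of classes of brackets $\mu$ such that: (h1) $\mu$ satisfies the Jacobi identity, $\mu(\mathbb R^q,\mathbb R^q)\subset\mathbb R^q$, $\mu(\mathbb R^q,\mathbb R^m)\subset\mathbb R^m$; (h2) $\langle\mu(Z,X),Y\rangle_{\rm st}+\langle X,\mu(Z,Y)\rangle_{\rm st}=0$ for $X,Y\in\mathbb R^m$, $Z\in\mathbb R^q$; (h3) no nonzero $Z\in\mathbb R^q$ satisfies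 $\mu(Z,\mathbb R^m)=0$. $\mathcal H^{\rm loc}_m=\bigcup_q\mathcal H^{\rm loc}_{q,m}$. If $\tilde\mu$ satisfies (h1),(h2) but not (h3), let $\mathbb R^{q-q'}=\{Z\in\mathbb R^q:\tilde\mu(Z,\mathbb R^m)=0\}$ ($0\le q'<q$), choose a complement $\mathbb R^{q'}$ so that $\mathbb R^q=\mathbb R^{q-q'}\oplus\mathbb R^{q'}$, and define the restriction $\tilde\mu_{|q',m}=\mathrm{pr}_{\mathbb R^{q'+m}}\circ\tilde\mu|_{\mathbb R^{q'+m}\times\mathbb R^{q'+m}}$, where $\mathrm{pr}$ is the projection along $\mathbb R^{q-q'}$; then $\tilde\mu_{|q',m}\in\mathcal H^{\rm loc}_{q',m}$. Algebraic convergence. $(\mu^{(n)})\subset\mathcal H^{\rm loc}_{q,m}$ converges algebraically to $\mu^{(\infty)}\in\mathcal H^{\rm loc}_m$ if either (a) $\mu^{(\infty)}\in\mathcal H^{\rm loc}_{q,m}$ and $\mu^{(n)}\to\mu^{(\infty)}$ in $\mathcal V_{q,m}$, or (b) $\mu^{(\infty)}\in\mathcal H^{\rm loc}_{q',m}$ with $q'<q$ and $\mu^{(n)}\to\tilde\mu$ in $\mathcal V_{q,m}$ for some $\tilde\mu\in\mathcal V_{q,m}\setminus\mathcal H^{\rm loc}_{q,m}$ (satisfying (h1),(h2)) with $\tilde\mu_{|q',m}=\mu^{(\infty)}$. Each $\mu\in\mathcal H^{\rm loc}_m$ determines, uniquely up to equivariant local isometry, a locally homogeneous Riemannian $m$-manifold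 $(\mathsf G_\mu/\mathsf H_\mu,g_\mu)$ ($\mathsf G_\mu$ simply connected with Lie algebra $(\mathbb R^{q+m},\mu)$, $\mathsf H_\mu$ the connected subgroup with Lie algebra $\mathbb R^q$) with tangent space at the origin $o$ identified isometrically with $(\mathbb R^m,\langle,\rangle_{\rm st})$. With $\mathrm{Rm}(X\wedge Y)=\nabla_{[X,Y]}-[\nabla_X,\nabla_Y]$, let $\mathrm{Rm}^k(\mu)(X_1,\dots,X_k|Y_1\wedge Y_2)=((\nabla^{g_\mu})^k_{X_1,\dots,X_k}\mathrm{Rm})(Y_1\wedge Y_2)$ at $o$. Let $\imath(m)$ be the maximum Singer invariant of locally homogeneous spaces of dimension $\le m$ (the Singer invariant of $(M,g)$ being the least $k$ with $\mathfrak i(k)=\mathfrak i(k+1)$, where $\mathfrak i(k)=\{A\in\mathfrak{so}(T_pM):A\cdot(\nabla^j\mathrm{Rm})_p=0,\ 0\le j\le k\}$). Infinitesimal convergence. $(\mu^{(n)})$ converges infinitesimally to $\mu^{(\infty)}$ if for every $s\ge\imath(m)+2$ there exist $a_n\in\mathrm O(m)$ with $a_n\cdot\mathrm{Rm}^k(\mu^{(n)})\to\mathrm{Rm}^k(\mu^{(\infty)})$ for all $0\le k\le s$. *)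

From Stdlib Require Import Reals Lra List Arith Bool.
Import ListNotations.
Open Scope R_scope.

Fixpoint fsum (n : nat) (f : nat -> R) : R :=
  match n with O => 0 | S n' => fsum n' f + f n' end.

Definition kdelta (i j : nat) : R := if Nat.eqb i j then 1 else 0.

(* A bracket on R^N = R^q (+) R^m (N = q+m) is given by its structure
   constants: c i j k = k-th coordinate of mu(e_i, e_j).  Only indices < N
   are ever used.  Coordinates 0..q-1 span R^q, coordinates q..q+m-1 span
   R^m (orthonormal for <,>_st). *)
Definition Br := nat -> nat -> nat -> R.

Definition IsSkew (N : nat) (c : Br) : Prop :=
  forall i j k, (i < N)%nat -> (j < N)%nat -> (k < N)%nat -> c i j k = - c j i k.

Definition InV (q m : nat) (c : Br) : Prop :=
  (q <= m * (m - 1) / 2)%nat /\ IsSkew (q + m) c.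

Definition Jacobi (N : nat) (c : Br) : Prop :=
  forall i j k l, (i < N)%nat -> (j < N)%nat -> (k < N)%nat -> (l < N)%nat ->
    fsum N (fun p => c i j p * c p k l + c j k p * c p i l + c k i p * c p j l) = 0.

Definition H1 (q m : nat) (c : Br) : Prop :=
  Jacobi (q + m) c /\
  (forall i j k, (i < q)%nat -> (j < q)%nat -> (q <= k < q + m)%nat -> c i j k = 0) /\
  (forall i j k, (i < q)%nat -> (q <= j < q + m)%nat -> (k < q)%nat -> c i j k = 0).

Definition H2 (q m : nat) (c : Br) : Prop :=
  forall z x y, (z < q)%nat -> (x < m)%nat -> (y < m)%nat ->
    c z (q + x)%nat (q + y)%nat + c z (q + y)%nat (q + x)%nat = 0.

Definition KillsRm (q m : nat) (c : Br) (Z : nat -> R) : Prop :=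
  forall j k, (j < m)%nat -> (k < q + m)%nat ->
    fsum q (fun i => Z i * c i (q + j)%nat k) = 0.

Definition H3 (q m : nat) (c : Br) : Prop :=
  forall Z : nat -> R, KillsRm q m c Z -> forall i, (i < q)%nat -> Z i = 0.

(* representatives of classes in H^loc_{q,m} *)
Definition InH (q m : nat) (c : Br) : Prop :=
  InV q m c /\ H1 q m c /\ H2 q m c /\ H3 q m c.

Definition IsGL (q : nat) (A Ai : nat -> nat -> R) : Prop :=
  forall i j, (i < q)%nat -> (j < q)%nat ->
    fsum q (fun l => A i l * Ai l j) = kdelta i j /\
    fsum q (fun l => Ai i l * A l j) = kdelta i j.

Definition IsO (m : nat) (B : nat -> nat -> R) : Prop :=
  forall i j, (i < m)%nat -> (j < m)%nat -> fsum m (fun l => B l i * B l j) = kdelta i j.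

Definition transp (B : nat -> nat -> R) : nat -> nat -> R := fun i j => B j i.

Definition blk (q : nat) (A B : nat -> nat -> R) : nat -> nat -> R :=
  fun i j => if andb (i <? q) (j <? q) then A i j
             else if andb (q <=? i) (q <=? j) then B (i - q)%nat (j - q)%nat else 0.

(* (g . mu)(X,Y) = g mu(g^{-1} X, g^{-1} Y), gi = g^{-1} *)
Definition act (N : nat) (g gi : nat -> nat -> R) (c : Br) : Br :=
  fun i j k => fsum N (fun a => fsum N (fun b => fsum N (fun l =>
                 gi a i * gi b j * c a b l * g k l))).

Definition actG (q m : nat) (A Ai B : nat -> nat -> R) (c : Br) : Br :=
  act (q + m) (blk q A B) (blk q Ai (transp B)) c.

(* convergence in the quotient topology of V_{q,m} (the quotient map is
   open, so the images of sup-norm balls form a neighbourhood basis) *)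
Definition convV (q m : nat) (mus : nat -> Br) (mu : Br) : Prop :=
  forall eps, eps > 0 -> exists N0, forall n, (N0 <= n)%nat ->
    exists A Ai B, IsGL q A Ai /\ IsO m B /\
      forall i j k, (i < q + m)%nat -> (j < q + m)%nat -> (k < q + m)%nat ->
        Rabs (actG q m A Ai B (mus n) i j k - mu i j k) < eps.

Definition equivV (q m : nat) (c c' : Br) : Prop :=
  exists A Ai B, IsGL q A Ai /\ IsO m B /\
    forall i j k, (i < q + m)%nat -> (j < q + m)%nat -> (k < q + m)%nat ->
      actG q m A Ai B c i j k = c' i j k.

(* Adapted representative: {Z in R^q : mu(Z,R^m)=0} = span(e_q', ..., e_{q-1}),
   so that span(e_0..e_{q'-1}) is the chosen complement R^{q'}. *)
Definition KerAdapted (q q' m : nat) (c : Br) : Prop :=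
  forall Z : nat -> R, KillsRm q m c Z <-> (forall i, (i < q')%nat -> Z i = 0).

(* restriction mu_{|q',m}: keep coordinates 0..q'-1 and q..q+m-1 (relabelled
   as 0..q'+m-1), projecting along span(e_q',...,e_{q-1}) *)
Definition relab (q q' : nat) (i : nat) : nat :=
  if i <? q' then i else (i + (q - q'))%nat.

Definition restr (q q' : nat) (c : Br) : Br :=
  fun i j k => c (relab q q' i) (relab q q' j) (relab q q' k).

Definition alg_conv (q m : nat) (mus : nat -> Br) (q' : nat) (muinf : Br) : Prop :=
  (q' = q /\ InH q m muinf /\ convV q m mus muinf) \/
  ((q' < q)%nat /\ InH q' m muinf /\
    exists mut : Br, InV q m mut /\ H1 q m mut /\ H2 q m mut /\ ~ H3 q m mut /\
      convV q m mus mut /\ KerAdapted q q' m mut /\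
      equivV q' m (restr q q' mut) muinf).

(* Nomizu map of the Levi-Civita connection (Kobayashi-Nomizu II, X.3):
   Lam x a b = a-th coordinate of Lambda(e_x) e_b, where
   Lambda(X)Y = 1/2 [X,Y]_m + U(X,Y),
   2<U(X,Y),Z> = <[Z,X]_m,Y> + <X,[Z,Y]_m>.  Indices of R^m: 0..m-1. *)
Definition Lam (q m : nat) (c : Br) (x : nat) : nat -> nat -> R :=
  fun a b => / 2 * c (q + x)%nat (q + b)%nat (q + a)%nat
           + / 2 * (c (q + a)%nat (q + x)%nat (q + b)%nat + c (q + a)%nat (q + b)%nat (q + x)%nat).

Definition adh (q m : nat) (c : Br) (h : nat) : nat -> nat -> R :=
  fun a b => c h (q + b)%nat (q + a)%nat.

Definition mm (m : nat) (L M : nat -> nat -> R) : nat -> nat -> R :=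
  fun a b => fsum m (fun l => L a l * M l b).

(* Rm(e_x /\ e_y) = nabla_{[X,Y]} - [nabla_X, nabla_Y]
   = Lambda([X,Y]_m) + ad([X,Y]_h)|_m - [Lambda(X), Lambda(Y)]  (minus the
   Kobayashi-Nomizu curvature R(X,Y)) *)
Definition Rm0 (q m : nat) (c : Br) (x y : nat) : nat -> nat -> R :=
  fun a b =>
    fsum m (fun z => c (q + x)%nat (q + y)%nat (q + z)%nat * Lam q m c z a b)
  + fsum q (fun h => c (q + x)%nat (q + y)%nat h * adh q m c h a b)
  - (mm m (Lam q m c x) (Lam q m c y) a b - mm m (Lam q m c y) (Lam q m c x) a b).

(* tensors T(X_1..X_k | Y_1 /\ Y_2) in End(R^m), on basis vectors:
   T xs y1 y2 a b = a-th coordinate of T(e_xs | e_y1 /\ e_y2) e_b *)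
Definition Tens := list nat -> nat -> nat -> nat -> nat -> R.

Fixpoint replace_nth (p v : nat) (l : list nat) : list nat :=
  match l, p with
  | [], _ => []
  | _ :: t, O => v :: t
  | h :: t, S p' => h :: replace_nth p' v t
  end.

Definition deriv (m : nat) (L : nat -> nat -> R) (T : Tens) : Tens :=
  fun xs y1 y2 a b =>
    fsum m (fun c => L a c * T xs y1 y2 c b)
  - fsum m (fun c => T xs y1 y2 a c * L c b)
  - fsum (length xs) (fun p => fsum m (fun c => L c (nth p xs O) * T (replace_nth p c xs) y1 y2 a b))
  - fsum m (fun c => L c y1 * T xs c y2 a b)
  - fsum m (fun c => L c y2 * T xs y1 c a b).

(* Rm^k(mu)(X_1,..,X_k | Y_1 /\ Y_2) = ((nabla^k)_{X_1..X_k} Rm)(Y_1/\Y_2) at o;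
   for invariant tensors, (nabla_X K)_o = Lambda(X) . K_o *)
Fixpoint RmK (q m : nat) (c : Br) (k : nat) : Tens :=
  match k with
  | O => fun _ y1 y2 a b => Rm0 q m c y1 y2 a b
  | S k' => fun xs y1 y2 a b =>
      match xs with
      | [] => 0
      | x :: xs' => deriv m (Lam q m c x) (RmK q m c k') xs' y1 y2 a b
      end
  end.

Fixpoint sumLists (m k : nat) (f : list nat -> R) : R :=
  match k with
  | O => f []
  | S k' => fsum m (fun z => sumLists m k' (fun zs => f (z :: zs)))
  end.

Fixpoint pw (a : nat -> nat -> R) (xs zs : list nat) : R :=
  match xs, zs with
  | x :: xs', z :: zs' => a x z * pw a xs' zs'
  | _, _ => 1
  end.

(* (a . T)(X.. | Y1/\Y2) = a T(a^{-1}X.. | a^{-1}Y1 /\ a^{-1}Y2) a^{-1}, a in O(m) *)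
Definition tact (m : nat) (a : nat -> nat -> R) (T : Tens) : Tens :=
  fun xs y1 y2 a0 b0 =>
    sumLists m (length xs) (fun zs => pw a xs zs *
      fsum m (fun z1 => fsum m (fun z2 => fsum m (fun c => fsum m (fun d =>
        a y1 z1 * a y2 z2 * a a0 c * a b0 d * T zs z1 z2 c d))))).

(* infinitesimal convergence (quantifying over all s is the
   same as over all s >= imath(m)+2, the condition being monotone in s) *)
Definition inf_conv (q m : nat) (mus : nat -> Br) (q' : nat) (muinf : Br) : Prop :=
  forall s : nat, exists an : nat -> nat -> nat -> R,
    (forall n, IsO m (an n)) /\
    forall (k : nat) (xs : list nat) (y1 y2 a b : nat),
      (k <= s)%nat -> length xs = k -> Forall (fun x => (x < m)%nat) xs ->
      (y1 < m)%nat -> (y2 < m)%nat -> (a < m)%nat -> (b < m)%nat ->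
      Un_cv (fun n => tact m (an n) (RmK q m (mus n) k) xs y1 y2 a b)
            (RmK q' m muinf k xs y1 y2 a b).

(* (i) The tensors [RmK] are polynomials in the structure constants, hence
   continuous in the bracket. They are equivariant: transforming the bracket by
   (A, B) in GL(q) x O(m) transforms every [RmK] by B alone, since in [Rm0] the
   R^q-component of [X, Y] meets [ad] through A and its inverse. And directions
   of R^q acting trivially on R^m do not enter [RmK], so the restriction of
   mu~ has the same tensors as mu~. Algebraic convergence is entrywise
   convergence after basis changes (A_n, B_n), so the tensors converge after
   applying B_n (composed with the O(m)-part of the identification of the
   restriction of mu~ with the limit).
   (ii) The abelian bracket on R^2 (q = 0) and the Lie algebra of the Euclidean
   motions of the plane (q = 1) both present the flat plane: all tensors vanish,
   so the constant sequence converges infinitesimally, but an algebraic limit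
   never has larger q. *)

From Stdlib Require Import Reals Lra Lia List Bool Setoid Morphisms Classical.
From Stdlib Require Import FunctionalExtensionality IndefiniteDescription.
Import ListNotations.
Open Scope R_scope.

Lemma fsum_ext n f g : (forall i, (i < n)%nat -> f i = g i) -> fsum n f = fsum n g.
Proof.
  induction n; simpl; intros H; [reflexivity|].
  rewrite IHn by (intros; apply H; lia). rewrite H by lia. reflexivity.
Qed.

#[export] Instance fsum_proper n : Proper (pointwise_relation nat eq ==> eq) (fsum n).
Proof. intros f g H. apply fsum_ext. intros; apply H. Qed.

Lemma fsum_plus n f g : fsum n (fun i => f i + g i) = fsum n f + fsum n g.
Proof. induction n; simpl; [ring|]. rewrite IHn; ring. Qed.

Lemma fsum_minus n f g : fsum n (fun i => f i - g i) = fsum n f - fsum n g.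
Proof. induction n; simpl; [ring|]. rewrite IHn; ring. Qed.

Lemma fsum_mult_l n c f : fsum n (fun i => c * f i) = c * fsum n f.
Proof. induction n; simpl; [ring|]. rewrite IHn; ring. Qed.

Lemma fsum_mult_r n c f : fsum n (fun i => f i * c) = fsum n f * c.
Proof. induction n; simpl; [ring|]. rewrite IHn; ring. Qed.

Lemma fsum_eq_0 n f : (forall i, (i < n)%nat -> f i = 0) -> fsum n f = 0.
Proof.
  intros H. rewrite (fsum_ext n f (fun _ => 0)) by auto. clear H.
  induction n; simpl; [|rewrite IHn]; ring.
Qed.

Lemma fsum_swap n m (f : nat -> nat -> R) :
  fsum n (fun i => fsum m (fun j => f i j)) = fsum m (fun j => fsum n (fun i => f i j)).
Proof.
  induction n; simpl.
  - symmetry; apply fsum_eq_0; auto.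
  - rewrite IHn, <- fsum_plus. reflexivity.
Qed.

Lemma fsum_split q m f : fsum (q + m) f = fsum q f + fsum m (fun i => f (q + i)%nat).
Proof.
  induction m; simpl.
  - rewrite Nat.add_0_r; ring.
  - rewrite Nat.add_succ_r; simpl. rewrite IHm; ring.
Qed.

Lemma fsum_prod n k f g : fsum n f * fsum k g = fsum n (fun i => fsum k (fun j => f i * g j)).
Proof.
  rewrite <- fsum_mult_r. apply fsum_ext; intros. rewrite <- fsum_mult_l. reflexivity.
Qed.

Lemma kdelta_sym i j : kdelta i j = kdelta j i.
Proof. unfold kdelta. destruct (Nat.eqb_spec i j), (Nat.eqb_spec j i); auto; lia. Qed.

Lemma fsum_kdelta n j f : (j < n)%nat -> fsum n (fun l => kdelta l j * f l) = f j.
Proof.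
  induction n; intros H; simpl; [lia|]. unfold kdelta at 2.
  destruct (Nat.eqb_spec n j).
  - subst. rewrite fsum_eq_0; [ring|].
    intros i Hi. unfold kdelta. destruct (Nat.eqb_spec i j); [lia|ring].
  - rewrite IHn by lia. ring.
Qed.

Lemma fsum_contract n (M : nat -> nat -> nat -> R) f g :
  (forall u v, (u < n)%nat -> (v < n)%nat -> fsum n (fun l => M l u v) = kdelta u v) ->
  fsum n (fun u => fsum n (fun v => f u * g v * fsum n (fun l => M l u v))) =
  fsum n (fun u => f u * g u).
Proof.
  intros HM. apply fsum_ext; intros u Hu.
  rewrite (fsum_ext n _ (fun v => kdelta v u * (f u * g v))) by
    (intros v Hv; rewrite HM, kdelta_sym by auto; ring).
  apply fsum_kdelta; auto.
Qed.

Lemma sumLists_ext m k f g :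
  (forall zs, length zs = k -> Forall (fun z => (z < m)%nat) zs -> f zs = g zs) ->
  sumLists m k f = sumLists m k g.
Proof.
  revert f g; induction k; intros f g H; simpl.
  - apply H; auto.
  - apply fsum_ext; intros z Hz. apply IHk. intros zs H1 H2. apply H; simpl; auto.
Qed.

Lemma sumLists_minus m k f g :
  sumLists m k (fun zs => f zs - g zs) = sumLists m k f - sumLists m k g.
Proof. revert f g; induction k; intros; simpl; auto. setoid_rewrite IHk. apply fsum_minus. Qed.

Lemma sumLists_mult_l m k c f : sumLists m k (fun zs => c * f zs) = c * sumLists m k f.
Proof. revert f; induction k; intros; simpl; auto. setoid_rewrite IHk. apply fsum_mult_l. Qed.

Lemma sumLists_eq_0 m k : sumLists m k (fun _ => 0) = 0.
Proof. induction k; simpl; auto. apply fsum_eq_0; auto. Qed.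

Lemma sumLists_fsum m k n F :
  sumLists m k (fun zs => fsum n (fun i => F zs i)) =
  fsum n (fun i => sumLists m k (fun zs => F zs i)).
Proof. revert F; induction k; intros; simpl; auto. setoid_rewrite IHk. apply fsum_swap. Qed.

Lemma length_replace_nth p v l : length (replace_nth p v l) = length l.
Proof. revert p; induction l; intros [|p]; simpl; auto. Qed.

Lemma Forall_replace_nth (P : nat -> Prop) p v l : Forall P l -> P v -> Forall P (replace_nth p v l).
Proof. revert p; induction l; intros [|p] H Hv; simpl; auto; inversion H; subst; constructor; auto. Qed.

Definition mxv (m : nat) (P : nat -> nat -> R) (f : nat -> R) (y : nat) : R :=
  fsum m (fun z => P y z * f z).

Definition mxv_list (m : nat) (P : nat -> nat -> R) (F : list nat -> R) (xs : list nat) : R :=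
  sumLists m (length xs) (fun zs => pw P xs zs * F zs).

(* [mconj m B L] is the matrix [B L B^T]. *)
Definition mconj (m : nat) (B L : nat -> nat -> R) (a b : nat) : R :=
  mxv m B (fun v => mxv m B (fun w => L v w) b) a.

Lemma mxv_ext m P f g y : (forall z, (z < m)%nat -> f z = g z) -> mxv m P f y = mxv m P g y.
Proof. intros H; unfold mxv; apply fsum_ext; intros; rewrite H; auto. Qed.

#[export] Instance mxv_proper m P : Proper (pointwise_relation nat eq ==> eq ==> eq) (mxv m P).
Proof. intros f g H y y' <-. apply mxv_ext; intros; apply H. Qed.

Lemma mxv_plus m P f g y : mxv m P (fun z => f z + g z) y = mxv m P f y + mxv m P g y.
Proof. unfold mxv. rewrite <- fsum_plus. apply fsum_ext; intros; ring. Qed.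

Lemma mxv_minus m P f g y : mxv m P (fun z => f z - g z) y = mxv m P f y - mxv m P g y.
Proof. unfold mxv. rewrite <- fsum_minus. apply fsum_ext; intros; ring. Qed.

Lemma mxv_mult m P c f y : mxv m P (fun z => c * f z) y = c * mxv m P f y.
Proof. unfold mxv. rewrite <- fsum_mult_l. apply fsum_ext; intros; ring. Qed.

Lemma mxv_fsum m P n F y :
  mxv m P (fun z => fsum n (fun i => F z i)) y = fsum n (fun i => mxv m P (fun z => F z i) y).
Proof. unfold mxv. setoid_rewrite <- fsum_mult_l. apply fsum_swap. Qed.

Lemma mxv_swap m n P Q F a b :
  mxv m P (fun u => mxv n Q (fun v => F u v) b) a = mxv n Q (fun v => mxv m P (fun u => F u v) a) b.
Proof.
  unfold mxv. setoid_rewrite <- fsum_mult_l. rewrite fsum_swap.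
  apply fsum_ext; intros; apply fsum_ext; intros; ring.
Qed.

Lemma mxv_mm m P Q f y : mxv m P (fun z => mxv m Q f z) y = mxv m (mm m P Q) f y.
Proof.
  unfold mxv, mm. setoid_rewrite <- fsum_mult_l. rewrite fsum_swap. apply fsum_ext; intros.
  rewrite <- fsum_mult_r. apply fsum_ext; intros; ring.
Qed.

Lemma fsum_mxv_l m n B H G x :
  fsum n (fun z => mxv m B (fun u => H u z) x * G z) = mxv m B (fun u => fsum n (fun z => H u z * G z)) x.
Proof.
  rewrite mxv_fsum. apply fsum_ext; intros.
  rewrite Rmult_comm, <- mxv_mult. apply mxv_ext; intros; ring.
Qed.

Lemma fsum_mxv_r m n B H G x :
  fsum n (fun z => G z * mxv m B (fun u => H u z) x) = mxv m B (fun u => fsum n (fun z => G z * H u z)) x.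
Proof. rewrite mxv_fsum. apply fsum_ext; intros. rewrite <- mxv_mult. apply mxv_ext; intros; ring. Qed.

Lemma fsum2_mxv_r m n k B K H x :
  fsum n (fun p => fsum k (fun c => K p c * mxv m B (fun u => H p c u) x)) =
  mxv m B (fun u => fsum n (fun p => fsum k (fun c => K p c * H p c u))) x.
Proof. rewrite mxv_fsum. apply fsum_ext; intros. apply fsum_mxv_r. Qed.

Lemma mxv_list_nil m P F : mxv_list m P F [] = F [].
Proof. unfold mxv_list; simpl; ring. Qed.

Lemma mxv_list_cons m P F x xs :
  mxv_list m P F (x :: xs) = mxv m P (fun z => mxv_list m P (fun zs => F (z :: zs)) xs) x.
Proof.
  unfold mxv_list, mxv; simpl. apply fsum_ext; intros z _. rewrite <- sumLists_mult_l.
  apply sumLists_ext; intros; ring.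
Qed.

Lemma mxv_list_ext m P F G xs :
  (forall zs, length zs = length xs -> Forall (fun z => (z < m)%nat) zs -> F zs = G zs) ->
  mxv_list m P F xs = mxv_list m P G xs.
Proof. intros H; unfold mxv_list; apply sumLists_ext; intros; rewrite H; auto. Qed.

#[export] Instance mxv_list_proper m P :
  Proper (pointwise_relation (list nat) eq ==> eq ==> eq) (mxv_list m P).
Proof. intros f g H y y' <-. apply mxv_list_ext; intros; apply H. Qed.

Lemma mxv_list_minus m P F G xs :
  mxv_list m P (fun zs => F zs - G zs) xs = mxv_list m P F xs - mxv_list m P G xs.
Proof. unfold mxv_list. rewrite <- sumLists_minus. apply sumLists_ext; intros; ring. Qed.

Lemma mxv_list_mult m P c F xs : mxv_list m P (fun zs => c * F zs) xs = c * mxv_list m P F xs.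
Proof. unfold mxv_list. rewrite <- sumLists_mult_l. apply sumLists_ext; intros; ring. Qed.

Lemma mxv_list_fsum m P n F xs :
  mxv_list m P (fun zs => fsum n (fun i => F zs i)) xs = fsum n (fun i => mxv_list m P (fun zs => F zs i) xs).
Proof.
  unfold mxv_list. rewrite <- sumLists_fsum. apply sumLists_ext; intros.
  rewrite <- fsum_mult_l; auto.
Qed.

Lemma mxv_list_mxv_swap m n P Q F xs b :
  mxv_list m P (fun zs => mxv n Q (fun v => F zs v) b) xs =
  mxv n Q (fun v => mxv_list m P (fun zs => F zs v) xs) b.
Proof. unfold mxv. rewrite mxv_list_fsum. apply fsum_ext; intros. apply mxv_list_mult. Qed.

Lemma mxv_list_mm m P Q F xs :
  mxv_list m P (fun zs => mxv_list m Q F zs) xs = mxv_list m (mm m P Q) F xs.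
Proof.
  revert F; induction xs as [|x xs IH]; intros F.
  - rewrite !mxv_list_nil. reflexivity.
  - rewrite mxv_list_cons. setoid_rewrite mxv_list_cons.
    setoid_rewrite mxv_list_mxv_swap. setoid_rewrite IH. apply mxv_mm.
Qed.

Lemma mxv_list_swap m P Q F ys zs :
  mxv_list m P (fun ws => mxv_list m Q (fun zs' => F ws zs') zs) ys =
  mxv_list m Q (fun zs' => mxv_list m P (fun ws => F ws zs') ys) zs.
Proof.
  revert F; induction ys as [|y ys IH]; intros F.
  - rewrite mxv_list_nil. apply mxv_list_ext; intros. rewrite mxv_list_nil. reflexivity.
  - rewrite mxv_list_cons. setoid_rewrite IH. rewrite <- mxv_list_mxv_swap.
    apply mxv_list_ext; intros. rewrite mxv_list_cons. reflexivity.
Qed.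

Lemma fsum_mxv_list_r m P K F xs :
  fsum m (fun c => K c * mxv_list m P (F c) xs) = mxv_list m P (fun zs => fsum m (fun c => K c * F c zs)) xs.
Proof. rewrite mxv_list_fsum. apply fsum_ext; intros. rewrite mxv_list_mult. reflexivity. Qed.

Lemma fsum_mxv_list_l m P K F xs :
  fsum m (fun c => mxv_list m P (F c) xs * K c) = mxv_list m P (fun zs => fsum m (fun c => F c zs * K c)) xs.
Proof.
  rewrite mxv_list_fsum. apply fsum_ext; intros.
  rewrite Rmult_comm, <- mxv_list_mult. apply mxv_list_ext; intros; ring.
Qed.

Lemma IsO_mxv_inner m B f g : IsO m B ->
  fsum m (fun z => mxv m B f z * mxv m B g z) = fsum m (fun z => f z * g z).
Proof.
  intros HO. unfold mxv. etransitivity; [|apply (fsum_contract m (fun l u v => B l u * B l v)); auto].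
  setoid_rewrite fsum_prod. rewrite fsum_swap. apply fsum_ext; intros.
  rewrite fsum_swap. apply fsum_ext; intros. rewrite <- fsum_mult_l. apply fsum_ext; intros. ring.
Qed.

Lemma IsGL_pairing q A Ai X Y : IsGL q A Ai ->
  fsum q (fun h => fsum q (fun l => A h l * X l) * fsum q (fun al => Ai al h * Y al)) =
  fsum q (fun l => X l * Y l).
Proof.
  intros HG. etransitivity; [|apply (fsum_contract q (fun h l al => Ai al h * A h l))].
  - setoid_rewrite fsum_prod. rewrite fsum_swap. apply fsum_ext; intros.
    rewrite fsum_swap. apply fsum_ext; intros. rewrite <- fsum_mult_l. apply fsum_ext; intros. ring.
  - intros l al Hl Hal. rewrite kdelta_sym. apply (HG al l Hal Hl).
Qed.

Lemma IsO_mm m P Q : IsO m P -> IsO m Q -> IsO m (mm m P Q).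
Proof.
  intros HP HQ i j Hi Hj. unfold mm. rewrite <- (HQ i j Hi Hj).
  etransitivity; [|apply (fsum_contract m (fun l u v => P l u * P l v)); auto].
  setoid_rewrite fsum_prod. rewrite fsum_swap. apply fsum_ext; intros.
  rewrite fsum_swap. apply fsum_ext; intros. rewrite <- fsum_mult_l. apply fsum_ext; intros. ring.
Qed.

Lemma IsO_kdelta m : IsO m kdelta.
Proof. intros i j Hi Hj. rewrite fsum_kdelta; auto. Qed.

Lemma mconj_plus m B L M a b :
  mconj m B (fun v w => L v w + M v w) a b = mconj m B L a b + mconj m B M a b.
Proof. unfold mconj. rewrite <- mxv_plus. apply mxv_ext; intros. apply mxv_plus. Qed.

Lemma mconj_minus m B L M a b :
  mconj m B (fun v w => L v w - M v w) a b = mconj m B L a b - mconj m B M a b.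
Proof. unfold mconj. rewrite <- mxv_minus. apply mxv_ext; intros. apply mxv_minus. Qed.

Lemma mconj_mult m B c L a b : mconj m B (fun v w => c * L v w) a b = c * mconj m B L a b.
Proof. unfold mconj. rewrite <- mxv_mult. apply mxv_ext; intros. apply mxv_mult. Qed.

Lemma mconj_fsum m B n L a b :
  mconj m B (fun v w => fsum n (fun i => L i v w)) a b = fsum n (fun i => mconj m B (L i) a b).
Proof. unfold mconj. rewrite <- mxv_fsum. apply mxv_ext; intros. apply mxv_fsum. Qed.

Lemma mconj_mxv m B L x a b :
  mconj m B (fun v w => mxv m B (fun u => L u v w) x) a b = mxv m B (fun u => mconj m B (L u) a b) x.
Proof.
  unfold mconj. symmetry. rewrite mxv_swap. apply mxv_ext; intros.
  rewrite mxv_swap. reflexivity.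
Qed.

Lemma mm_mconj m B L M a b : IsO m B ->
  mm m (mconj m B L) (mconj m B M) a b = mconj m B (mm m L M) a b.
Proof.
  intros HO. unfold mm, mconj. rewrite fsum_mxv_l. apply mxv_ext; intros v _.
  rewrite IsO_mxv_inner by auto. rewrite fsum_mxv_r. reflexivity.
Qed.

(** * The O(m)-action on tensors *)

Lemma tact_expand m P T xs y1 y2 a b :
  tact m P T xs y1 y2 a b =
  mxv_list m P (fun zs => mxv m P (fun z1 => mxv m P (fun z2 =>
    mxv m P (fun c => mxv m P (fun d => T zs z1 z2 c d) b) a) y2) y1) xs.
Proof.
  unfold tact, mxv_list, mxv. apply sumLists_ext; intros zs _ _. f_equal.
  apply fsum_ext; intros. rewrite <- !fsum_mult_l. apply fsum_ext; intros.
  rewrite <- !fsum_mult_l. apply fsum_ext; intros. rewrite <- !fsum_mult_l.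
  apply fsum_ext; intros. ring.
Qed.

Lemma tact_minus m P T1 T2 xs y1 y2 a b :
  tact m P (fun zs z1 z2 c d => T1 zs z1 z2 c d - T2 zs z1 z2 c d) xs y1 y2 a b =
  tact m P T1 xs y1 y2 a b - tact m P T2 xs y1 y2 a b.
Proof.
  rewrite !tact_expand, <- mxv_list_minus. apply mxv_list_ext; intros.
  rewrite <- mxv_minus. apply mxv_ext; intros. rewrite <- mxv_minus. apply mxv_ext; intros.
  rewrite <- mxv_minus. apply mxv_ext; intros. rewrite <- mxv_minus. reflexivity.
Qed.

Lemma tact_eq_0 m P T xs y1 y2 a b :
  (forall zs z1 z2 c d, T zs z1 z2 c d = 0) -> tact m P T xs y1 y2 a b = 0.
Proof.
  intros HT. unfold tact. transitivity (sumLists m (length xs) (fun _ => 0)); [|apply sumLists_eq_0].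
  apply sumLists_ext; intros.
  rewrite fsum_eq_0; [ring|]. intros. apply fsum_eq_0; intros.
  apply fsum_eq_0; intros. apply fsum_eq_0; intros. rewrite HT. ring.
Qed.

Lemma tact_mxv m B G x xs y1 y2 a b :
  tact m B (fun zs z1 z2 c d => mxv m B (fun u => G u zs z1 z2 c d) x) xs y1 y2 a b =
  mxv m B (fun u => tact m B (G u) xs y1 y2 a b) x.
Proof.
  rewrite tact_expand. setoid_rewrite tact_expand. rewrite <- mxv_list_mxv_swap.
  apply mxv_list_ext; intros zs _ _. symmetry.
  rewrite mxv_swap. apply mxv_ext; intros. rewrite mxv_swap. apply mxv_ext; intros.
  rewrite mxv_swap. apply mxv_ext; intros. rewrite mxv_swap. reflexivity.
Qed.

Lemma tact_as_mxv_list m P T xs y1 y2 a b :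
  tact m P T xs y1 y2 a b =
  mxv_list m P (fun zs => mxv_list m P (fun ws =>
    T zs (nth 0 ws O) (nth 1 ws O) (nth 2 ws O) (nth 3 ws O)) [y1; y2; a; b]) xs.
Proof.
  rewrite tact_expand. apply mxv_list_ext; intros.
  repeat setoid_rewrite mxv_list_cons. setoid_rewrite mxv_list_nil. reflexivity.
Qed.

Lemma tact_mm m P Q T xs y1 y2 a b :
  tact m (mm m P Q) T xs y1 y2 a b = tact m P (tact m Q T) xs y1 y2 a b.
Proof.
  rewrite !tact_as_mxv_list, <- mxv_list_mm. apply mxv_list_ext; intros zs _ _.
  setoid_rewrite tact_as_mxv_list. rewrite mxv_list_swap, <- mxv_list_mm.
  apply mxv_list_ext; intros ws Hw _.
  destruct ws as [|w0 [|w1 [|w2 [|w3 [|]]]]]; simpl in Hw; try lia.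
  rewrite mxv_list_swap. reflexivity.
Qed.

Lemma deriv_mxv m B L T x xs y1 y2 a b :
  deriv m (fun a' b' => mxv m B (fun u => L u a' b') x) T xs y1 y2 a b =
  mxv m B (fun u => deriv m (L u) T xs y1 y2 a b) x.
Proof.
  unfold deriv. rewrite !mxv_minus. f_equal; [f_equal; [f_equal; [f_equal|]|]|].
  1, 4, 5: apply fsum_mxv_l.
  - apply fsum_mxv_r.
  - rewrite mxv_fsum. apply fsum_ext; intros. apply fsum_mxv_l.
Qed.

Lemma deriv_ext m L T1 T2 xs y1 y2 a b :
  (forall zs z1 z2 c d, length zs = length xs -> Forall (fun z => (z < m)%nat) zs ->
     (z1 < m)%nat -> (z2 < m)%nat -> (c < m)%nat -> (d < m)%nat -> T1 zs z1 z2 c d = T2 zs z1 z2 c d) ->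
  Forall (fun z => (z < m)%nat) xs -> (y1 < m)%nat -> (y2 < m)%nat -> (a < m)%nat -> (b < m)%nat ->
  deriv m L T1 xs y1 y2 a b = deriv m L T2 xs y1 y2 a b.
Proof.
  intros HT Hxs Hy1 Hy2 Ha Hb. unfold deriv.
  f_equal; [f_equal; [f_equal; [f_equal|]|]|].
  1, 2, 4, 5: apply fsum_ext; intros; rewrite HT; auto.
  apply fsum_ext; intros; apply fsum_ext; intros. rewrite HT; auto.
  - apply length_replace_nth.
  - apply Forall_replace_nth; auto.
Qed.

Section Orthogonal.

Variables (m : nat) (B : nat -> nat -> R).
Hypothesis HB : IsO m B.

Lemma mconj_mul_mxv L f a :
  fsum m (fun c => mconj m B L a c * mxv m B f c) = mxv m B (fun v => fsum m (fun c => L v c * f c)) a.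
Proof. unfold mconj. rewrite fsum_mxv_l. apply mxv_ext; intros. apply IsO_mxv_inner; auto. Qed.

Lemma mxv_mul_mconj L f b :
  fsum m (fun c => mxv m B f c * mconj m B L c b) = mxv m B (fun w => fsum m (fun c => f c * L c w)) b.
Proof.
  unfold mconj. setoid_rewrite mxv_swap. rewrite fsum_mxv_r.
  apply mxv_ext; intros. apply IsO_mxv_inner; auto.
Qed.

Lemma mconj_tr_mul_mxv L f y :
  fsum m (fun c => mconj m B L c y * mxv m B f c) = mxv m B (fun w => fsum m (fun c => L c w * f c)) y.
Proof.
  transitivity (fsum m (fun c => mxv m B f c * mconj m B L c y)).
  - apply fsum_ext; intros; ring.
  - rewrite mxv_mul_mconj. apply mxv_ext; intros; apply fsum_ext; intros; ring.
Qed.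

Lemma mconj_tr_mul_mxv_list L G xs p : (p < length xs)%nat ->
  fsum m (fun c => mconj m B L c (nth p xs O) * mxv_list m B G (replace_nth p c xs)) =
  mxv_list m B (fun zs => fsum m (fun c => L c (nth p zs O) * G (replace_nth p c zs))) xs.
Proof.
  revert p G; induction xs as [|x xs IH]; intros p G Hp; simpl in Hp; [lia|].
  destruct p as [|p]; simpl; setoid_rewrite mxv_list_cons.
  - rewrite mconj_tr_mul_mxv. apply mxv_ext; intros z _.
    rewrite fsum_mxv_list_r. reflexivity.
  - rewrite fsum_mxv_r. apply mxv_ext; intros z _. rewrite IH by lia. reflexivity.
Qed.

Lemma mconj_tact_out L T xs y1 y2 a b :
  fsum m (fun c => mconj m B L a c * tact m B T xs y1 y2 c b) =
  tact m B (fun zs z1 z2 a' b' => fsum m (fun c => L a' c * T zs z1 z2 c b')) xs y1 y2 a b.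
Proof.
  setoid_rewrite tact_expand. rewrite fsum_mxv_list_r. apply mxv_list_ext; intros zs _ _.
  rewrite fsum_mxv_r. apply mxv_ext; intros z1 _. rewrite fsum_mxv_r. apply mxv_ext; intros z2 _.
  rewrite mconj_mul_mxv. apply mxv_ext; intros v _. rewrite fsum_mxv_r. reflexivity.
Qed.

Lemma mconj_tact_in L T xs y1 y2 a b :
  fsum m (fun c => tact m B T xs y1 y2 a c * mconj m B L c b) =
  tact m B (fun zs z1 z2 a' b' => fsum m (fun c => T zs z1 z2 a' c * L c b')) xs y1 y2 a b.
Proof.
  setoid_rewrite tact_expand. rewrite fsum_mxv_list_l. apply mxv_list_ext; intros zs _ _.
  rewrite fsum_mxv_l. apply mxv_ext; intros z1 _. rewrite fsum_mxv_l. apply mxv_ext; intros z2 _.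
  rewrite fsum_mxv_l. apply mxv_ext; intros v _. rewrite mxv_mul_mconj. reflexivity.
Qed.

Lemma mconj_tact_xs L T xs y1 y2 a b :
  fsum (length xs) (fun p => fsum m (fun c =>
    mconj m B L c (nth p xs O) * tact m B T (replace_nth p c xs) y1 y2 a b)) =
  tact m B (fun zs z1 z2 a' b' => fsum (length zs) (fun p => fsum m (fun c =>
    L c (nth p zs O) * T (replace_nth p c zs) z1 z2 a' b'))) xs y1 y2 a b.
Proof.
  setoid_rewrite tact_expand.
  erewrite fsum_ext; [|intros p Hp; apply mconj_tr_mul_mxv_list; exact Hp].
  rewrite <- mxv_list_fsum. apply mxv_list_ext; intros zs Hl _. rewrite Hl.
  rewrite fsum2_mxv_r. apply mxv_ext; intros z1 _. rewrite fsum2_mxv_r. apply mxv_ext; intros z2 _.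
  rewrite fsum2_mxv_r. apply mxv_ext; intros v _. apply fsum2_mxv_r.
Qed.

Lemma mconj_tact_y1 L T xs y1 y2 a b :
  fsum m (fun c => mconj m B L c y1 * tact m B T xs c y2 a b) =
  tact m B (fun zs z1 z2 a' b' => fsum m (fun c => L c z1 * T zs c z2 a' b')) xs y1 y2 a b.
Proof.
  setoid_rewrite tact_expand. rewrite fsum_mxv_list_r. apply mxv_list_ext; intros zs _ _.
  rewrite mconj_tr_mul_mxv. apply mxv_ext; intros z1 _.
  rewrite fsum_mxv_r. apply mxv_ext; intros z2 _. rewrite fsum_mxv_r. apply mxv_ext; intros v _.
  apply fsum_mxv_r.
Qed.

Lemma mconj_tact_y2 L T xs y1 y2 a b :
  fsum m (fun c => mconj m B L c y2 * tact m B T xs y1 c a b) =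
  tact m B (fun zs z1 z2 a' b' => fsum m (fun c => L c z2 * T zs z1 c a' b')) xs y1 y2 a b.
Proof.
  setoid_rewrite tact_expand. rewrite fsum_mxv_list_r. apply mxv_list_ext; intros zs _ _.
  rewrite fsum_mxv_r. apply mxv_ext; intros z1 _.
  rewrite mconj_tr_mul_mxv. apply mxv_ext; intros z2 _. rewrite fsum_mxv_r. apply mxv_ext; intros v _.
  apply fsum_mxv_r.
Qed.

Lemma deriv_mconj_tact L T xs y1 y2 a b :
  deriv m (mconj m B L) (tact m B T) xs y1 y2 a b = tact m B (deriv m L T) xs y1 y2 a b.
Proof.
  unfold deriv. rewrite !tact_minus.
  rewrite <- mconj_tact_out, <- mconj_tact_in, <- mconj_tact_xs, <- mconj_tact_y1, <- mconj_tact_y2.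
  reflexivity.
Qed.

End Orthogonal.

(** * Change of basis *)

Lemma blk_mm q P Q u x : blk q P Q (q + u) (q + x) = Q u x.
Proof.
  unfold blk. rewrite (proj2 (Nat.ltb_ge _ _)), !(proj2 (Nat.leb_le _ _)) by lia. simpl.
  f_equal; lia.
Qed.

Lemma blk_qq q P Q i j : (i < q)%nat -> (j < q)%nat -> blk q P Q i j = P i j.
Proof. intros Hi Hj. unfold blk. rewrite !(proj2 (Nat.ltb_lt _ _)) by lia. reflexivity. Qed.

Lemma blk_qm q P Q i x : (i < q)%nat -> blk q P Q i (q + x) = 0.
Proof.
  intros Hi. unfold blk.
  rewrite (proj2 (Nat.ltb_ge (q + x) q)), (proj2 (Nat.leb_gt q i)) by lia.
  rewrite andb_false_r. reflexivity.
Qed.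

Lemma blk_mq q P Q u j : (j < q)%nat -> blk q P Q (q + u) j = 0.
Proof.
  intros Hj. unfold blk.
  rewrite (proj2 (Nat.ltb_ge (q + u) q)), (proj2 (Nat.leb_gt q j)) by lia.
  rewrite andb_false_r. reflexivity.
Qed.

Lemma fsum_blk_col_m q m P Q x F :
  fsum (q + m) (fun a => blk q P Q a (q + x) * F a) = fsum m (fun u => Q u x * F (q + u)%nat).
Proof.
  rewrite fsum_split, fsum_eq_0, Rplus_0_l.
  - apply fsum_ext; intros. rewrite blk_mm. reflexivity.
  - intros. rewrite blk_qm by auto. ring.
Qed.

Lemma fsum_blk_col_q q m P Q h F : (h < q)%nat ->
  fsum (q + m) (fun a => blk q P Q a h * F a) = fsum q (fun a => P a h * F a).
Proof.
  intros Hh. rewrite fsum_split, (fsum_eq_0 m), Rplus_0_r.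
  - apply fsum_ext; intros. rewrite blk_qq by auto. reflexivity.
  - intros. rewrite blk_mq by auto. ring.
Qed.

Lemma fsum_blk_row_m q m P Q z F :
  fsum (q + m) (fun l => blk q P Q (q + z) l * F l) = fsum m (fun w => Q z w * F (q + w)%nat).
Proof.
  rewrite fsum_split, fsum_eq_0, Rplus_0_l.
  - apply fsum_ext; intros. rewrite blk_mm. reflexivity.
  - intros. rewrite blk_mq by auto. ring.
Qed.

Lemma fsum_blk_row_q q m P Q h F : (h < q)%nat ->
  fsum (q + m) (fun l => blk q P Q h l * F l) = fsum q (fun l => P h l * F l).
Proof.
  intros Hh. rewrite fsum_split, (fsum_eq_0 m), Rplus_0_r.
  - apply fsum_ext; intros. rewrite blk_qq by auto. reflexivity.
  - intros. rewrite blk_qm by auto. ring.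
Qed.

Lemma act_nested N g gi c i j k :
  act N g gi c i j k =
  fsum N (fun a => gi a i * fsum N (fun b => gi b j * fsum N (fun l => g k l * c a b l))).
Proof.
  unfold act. apply fsum_ext; intros. rewrite <- fsum_mult_l. apply fsum_ext; intros.
  rewrite <- fsum_mult_l. setoid_rewrite <- fsum_mult_l. apply fsum_ext; intros. ring.
Qed.

Section BasisChange.

Variables (q m : nat) (A Ai B : nat -> nat -> R) (c : Br).

Let c' := actG q m A Ai B c.

Lemma actG_mmm x y z :
  c' (q + x)%nat (q + y)%nat (q + z)%nat =
  mxv m B (fun u => mxv m B (fun v => mxv m B (fun w => c (q + u)%nat (q + v)%nat (q + w)%nat) z) y) x.
Proof.
  unfold c', actG. rewrite act_nested, fsum_blk_col_m. unfold mxv, transp. apply fsum_ext; intros u _.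
  rewrite fsum_blk_col_m. f_equal. apply fsum_ext; intros v _.
  rewrite fsum_blk_row_m. f_equal.
Qed.

Lemma actG_mmq x y h : (h < q)%nat ->
  c' (q + x)%nat (q + y)%nat h =
  mxv m B (fun u => mxv m B (fun v => fsum q (fun l => A h l * c (q + u)%nat (q + v)%nat l)) y) x.
Proof.
  intros Hh. unfold c', actG. rewrite act_nested, fsum_blk_col_m. unfold mxv, transp.
  apply fsum_ext; intros u _. rewrite fsum_blk_col_m. f_equal. apply fsum_ext; intros v _.
  rewrite fsum_blk_row_q by auto. reflexivity.
Qed.

Lemma actG_qmm h y z : (h < q)%nat ->
  c' h (q + y)%nat (q + z)%nat =
  fsum q (fun al => Ai al h * mxv m B (fun v => mxv m B (fun w => c al (q + v)%nat (q + w)%nat) z) y).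
Proof.
  intros Hh. unfold c', actG. rewrite act_nested, fsum_blk_col_q by auto.
  apply fsum_ext; intros al _. rewrite fsum_blk_col_m. unfold mxv, transp. f_equal.
  apply fsum_ext; intros v _. rewrite fsum_blk_row_m. f_equal.
Qed.

Lemma Lam_actG x a b :
  Lam q m c' x a b = mxv m B (fun u => mconj m B (Lam q m c u) a b) x.
Proof.
  unfold Lam at 1. rewrite !actG_mmm.
  transitivity (mxv m B (fun u =>
      / 2 * mconj m B (fun v w => c (q + u)%nat (q + w)%nat (q + v)%nat) a b
    + / 2 * (mconj m B (fun v w => c (q + v)%nat (q + u)%nat (q + w)%nat) a b
           + mconj m B (fun v w => c (q + v)%nat (q + w)%nat (q + u)%nat) a b)) x).
  2:{ apply mxv_ext; intros. unfold Lam. rewrite mconj_plus, !mconj_mult, mconj_plus. reflexivity. }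
  rewrite mxv_plus, !mxv_mult, mxv_plus. unfold mconj. f_equal; [f_equal|f_equal; f_equal].
  - apply mxv_ext; intros u _. rewrite mxv_swap. reflexivity.
  - rewrite mxv_swap. reflexivity.
  - symmetry. rewrite mxv_swap. apply mxv_ext; intros. rewrite mxv_swap. reflexivity.
Qed.

Lemma adh_actG h a b : (h < q)%nat ->
  adh q m c' h a b = fsum q (fun al => Ai al h * mconj m B (adh q m c al) a b).
Proof.
  intros Hh. unfold adh at 1. rewrite actG_qmm by auto. apply fsum_ext; intros. f_equal.
  unfold mconj, adh. rewrite mxv_swap. reflexivity.
Qed.

Hypotheses (HA : IsGL q A Ai) (HB : IsO m B).

Lemma Rm0_actG x y a b :
  Rm0 q m c' x y a b = mxv m B (fun u => mxv m B (fun v => mconj m B (Rm0 q m c u v) a b) y) x.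
Proof.
  transitivity (mxv m B (fun u => mxv m B (fun v =>
      fsum m (fun z => c (q + u)%nat (q + v)%nat (q + z)%nat * mconj m B (Lam q m c z) a b)
    + fsum q (fun h => c (q + u)%nat (q + v)%nat h * mconj m B (adh q m c h) a b)
    - (mconj m B (mm m (Lam q m c u) (Lam q m c v)) a b
       - mconj m B (mm m (Lam q m c v) (Lam q m c u)) a b)) y) x).
  2:{ apply mxv_ext; intros u _. apply mxv_ext; intros v _. unfold Rm0.
      rewrite mconj_minus, mconj_plus, mconj_minus, !mconj_fsum.
      setoid_rewrite mconj_mult. reflexivity. }
  repeat setoid_rewrite mxv_minus. repeat setoid_rewrite mxv_plus.
  unfold Rm0 at 1. f_equal; [f_equal|f_equal].
  - setoid_rewrite Lam_actG. setoid_rewrite actG_mmm.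
    rewrite fsum_mxv_l. apply mxv_ext; intros u _. rewrite fsum_mxv_l. apply mxv_ext; intros v _.
    apply IsO_mxv_inner; auto.
  - erewrite fsum_ext; [|intros h Hh; rewrite actG_mmq, adh_actG by exact Hh; reflexivity].
    rewrite fsum_mxv_l. apply mxv_ext; intros u _. rewrite fsum_mxv_l. apply mxv_ext; intros v _.
    apply IsGL_pairing; auto.
  - unfold mm at 1. setoid_rewrite Lam_actG. rewrite fsum_mxv_l. apply mxv_ext; intros u _.
    rewrite fsum_mxv_r. apply mxv_ext; intros v _. apply mm_mconj; auto.
  - unfold mm at 1. setoid_rewrite Lam_actG. rewrite fsum_mxv_l. symmetry. rewrite mxv_swap.
    apply mxv_ext; intros u _. rewrite fsum_mxv_r. apply mxv_ext; intros v _.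
    symmetry. apply mm_mconj; auto.
Qed.

Lemma RmK_actG k xs y1 y2 a b : length xs = k -> Forall (fun z => (z < m)%nat) xs ->
  (y1 < m)%nat -> (y2 < m)%nat -> (a < m)%nat -> (b < m)%nat ->
  RmK q m c' k xs y1 y2 a b = tact m B (RmK q m c k) xs y1 y2 a b.
Proof.
  revert xs y1 y2 a b. induction k as [|k IH]; intros xs y1 y2 a b Hl Hxs Hy1 Hy2 Ha Hb.
  - destruct xs; [|discriminate]. rewrite tact_expand, mxv_list_nil. apply Rm0_actG.
  - destruct xs as [|x xs]; [discriminate|]. inversion Hxs; subst. injection Hl as <-. simpl.
    replace (Lam q m c' x) with (mconj m B (fun v w => mxv m B (fun u => Lam q m c u v w) x))
      by (do 2 (apply functional_extensionality; intro); rewrite mconj_mxv; symmetry; apply Lam_actG).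
    rewrite (deriv_ext _ _ _ (tact m B (RmK q m c (length xs)))) by auto.
    rewrite deriv_mconj_tact by exact HB.
    replace (deriv m (fun v w => mxv m B (fun u => Lam q m c u v w) x) (RmK q m c (length xs)))
      with (fun zs z1 z2 c0 d => mxv m B (fun u => deriv m (Lam q m c u) (RmK q m c (length xs)) zs z1 z2 c0 d) x)
      by (do 5 (apply functional_extensionality; intro); symmetry; apply deriv_mxv).
    rewrite tact_mxv, tact_expand, mxv_list_cons. apply mxv_ext; intros u _.
    rewrite tact_expand. reflexivity.
Qed.

End BasisChange.

(** * Continuity *)

Lemma Un_cv_const x : Un_cv (fun _ => x) x.
Proof. intros eps He. exists O. intros. unfold Rdist. rewrite Rminus_diag, Rabs_R0. auto. Qed.

Lemma Un_cv_fsum n (f : nat -> nat -> R) l :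
  (forall i, (i < n)%nat -> Un_cv (fun k => f k i) (l i)) -> Un_cv (fun k => fsum n (f k)) (fsum n l).
Proof.
  induction n; intros H; simpl.
  - apply Un_cv_const.
  - apply CV_plus; [apply IHn; intros|]; apply H; lia.
Qed.

Lemma Un_cv_sumLists m k (f : nat -> list nat -> R) l :
  (forall zs, length zs = k -> Forall (fun z => (z < m)%nat) zs -> Un_cv (fun n => f n zs) (l zs)) ->
  Un_cv (fun n => sumLists m k (f n)) (sumLists m k l).
Proof.
  revert f l; induction k; intros f l H; simpl.
  - apply H; auto.
  - apply Un_cv_fsum; intros z Hz. apply (IHk (fun n zs => f n (z :: zs)) (fun zs => l (z :: zs))).
    intros; apply H; simpl; auto.
Qed.

Ltac Un_cv_poly leaf := repeat first
  [ solve [leaf] | apply Un_cv_const | apply CV_minus | apply CV_plus | apply CV_mult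
  | apply Un_cv_fsum; intros ].

Definition Br_cv (q m : nat) (cs : nat -> Br) (c : Br) : Prop :=
  forall i j k, (i < q + m)%nat -> (j < q + m)%nat -> (k < q + m)%nat ->
    Un_cv (fun n => cs n i j k) (c i j k).

Section Continuity.

Variables (q m : nat) (cs : nat -> Br) (c : Br).
Hypothesis Hcs : Br_cv q m cs c.

Lemma Lam_cv x a b : (x < m)%nat -> (a < m)%nat -> (b < m)%nat ->
  Un_cv (fun n => Lam q m (cs n) x a b) (Lam q m c x a b).
Proof. intros Hx Ha Hb. unfold Lam. Un_cv_poly ltac:(apply Hcs; lia). Qed.

Lemma Rm0_cv x y a b : (x < m)%nat -> (y < m)%nat -> (a < m)%nat -> (b < m)%nat ->
  Un_cv (fun n => Rm0 q m (cs n) x y a b) (Rm0 q m c x y a b).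
Proof.
  intros Hx Hy Ha Hb. unfold Rm0, mm, adh.
  Un_cv_poly ltac:(first [apply Lam_cv; lia | apply Hcs; lia]).
Qed.

Lemma deriv_cv (Ts : nat -> Tens) T x xs y1 y2 a b :
  (forall zs z1 z2 c d, length zs = length xs -> Forall (fun z => (z < m)%nat) zs ->
     (z1 < m)%nat -> (z2 < m)%nat -> (c < m)%nat -> (d < m)%nat ->
     Un_cv (fun n => Ts n zs z1 z2 c d) (T zs z1 z2 c d)) ->
  Forall (fun z => (z < m)%nat) (x :: xs) ->
  (y1 < m)%nat -> (y2 < m)%nat -> (a < m)%nat -> (b < m)%nat ->
  Un_cv (fun n => deriv m (Lam q m (cs n) x) (Ts n) xs y1 y2 a b) (deriv m (Lam q m c x) T xs y1 y2 a b).
Proof.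
  intros HT Hxs Hy1 Hy2 Ha Hb. inversion Hxs; subst. unfold deriv.
  Un_cv_poly ltac:(first
    [ apply Lam_cv; auto; apply (proj1 (Forall_nth (fun z => (z < m)%nat) xs)); auto
    | apply HT; auto using length_replace_nth, Forall_replace_nth ]).
Qed.

Lemma RmK_cv k xs y1 y2 a b : Forall (fun z => (z < m)%nat) xs ->
  (y1 < m)%nat -> (y2 < m)%nat -> (a < m)%nat -> (b < m)%nat ->
  Un_cv (fun n => RmK q m (cs n) k xs y1 y2 a b) (RmK q m c k xs y1 y2 a b).
Proof.
  revert xs y1 y2 a b. induction k; intros xs y1 y2 a b Hxs Hy1 Hy2 Ha Hb; simpl.
  - apply Rm0_cv; auto.
  - destruct xs as [|x xs]; [apply Un_cv_const|].
    apply deriv_cv; auto.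
Qed.

End Continuity.

Lemma tact_cv m P (Ts : nat -> Tens) T xs y1 y2 a b :
  (forall zs z1 z2 c d, length zs = length xs -> Forall (fun z => (z < m)%nat) zs ->
     (z1 < m)%nat -> (z2 < m)%nat -> (c < m)%nat -> (d < m)%nat ->
     Un_cv (fun n => Ts n zs z1 z2 c d) (T zs z1 z2 c d)) ->
  Un_cv (fun n => tact m P (Ts n) xs y1 y2 a b) (tact m P T xs y1 y2 a b).
Proof. intros HT. unfold tact. apply Un_cv_sumLists; intros zs Hl Hzs. Un_cv_poly ltac:(apply HT; auto). Qed.

(* By continuity, along the constant sequence [c1], which converges entrywise to [c2]. *)
Lemma RmK_ext q m c1 c2 :
  (forall i j k, (i < q + m)%nat -> (j < q + m)%nat -> (k < q + m)%nat -> c1 i j k = c2 i j k) ->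
  forall k xs y1 y2 a b, Forall (fun z => (z < m)%nat) xs ->
  (y1 < m)%nat -> (y2 < m)%nat -> (a < m)%nat -> (b < m)%nat ->
  RmK q m c1 k xs y1 y2 a b = RmK q m c2 k xs y1 y2 a b.
Proof.
  intros H k xs y1 y2 a b Hxs Hy1 Hy2 Ha Hb.
  apply (UL_sequence (fun _ => RmK q m c1 k xs y1 y2 a b)); [apply Un_cv_const|].
  apply (RmK_cv q m (fun _ => c1) c2); auto.
  intros i j k' Hi Hj Hk. rewrite H by auto. apply Un_cv_const.
Qed.

(** * Restriction *)

Section Restriction.

Variables (q q' m : nat) (c : Br).
Hypotheses (Hq : (q' <= q)%nat) (Hker : KerAdapted q q' m c).

Lemma relab_m x : relab q q' (q' + x) = (q + x)%nat.
Proof. unfold relab. rewrite (proj2 (Nat.ltb_ge _ _)) by lia. lia. Qed.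

Lemma relab_q h : (h < q')%nat -> relab q q' h = h.
Proof. intros Hh. unfold relab. rewrite (proj2 (Nat.ltb_lt _ _)) by lia. reflexivity. Qed.

Lemma Lam_restr x a b : Lam q' m (restr q q' c) x a b = Lam q m c x a b.
Proof. unfold Lam, restr. rewrite !relab_m. reflexivity. Qed.

Lemma KerAdapted_bracket_0 h j k : (q' <= h < q)%nat -> (j < m)%nat -> (k < q + m)%nat ->
  c h (q + j)%nat k = 0.
Proof.
  intros Hh Hj Hk.
  assert (Hkill : KillsRm q m c (fun i => kdelta i h)).
  { apply Hker. intros i Hi. unfold kdelta. destruct (Nat.eqb_spec i h); [lia|reflexivity]. }
  specialize (Hkill j k Hj Hk). cbv beta in Hkill.
  rewrite fsum_kdelta in Hkill by lia. exact Hkill.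
Qed.

Lemma Rm0_restr x y a b : (a < m)%nat -> (b < m)%nat ->
  Rm0 q' m (restr q q' c) x y a b = Rm0 q m c x y a b.
Proof.
  intros Ha Hb. unfold Rm0, mm. setoid_rewrite Lam_restr. f_equal. f_equal.
  - apply fsum_ext; intros z _. unfold restr at 1. rewrite !relab_m. reflexivity.
  - replace (fsum q) with (fsum (q' + (q - q'))) by (f_equal; lia). rewrite fsum_split.
    rewrite (fsum_eq_0 (q - q')), Rplus_0_r.
    + apply fsum_ext; intros h Hh. unfold restr, adh. rewrite !relab_m, !relab_q by auto.
      reflexivity.
    + intros i Hi. unfold adh. rewrite (KerAdapted_bracket_0 (q' + i)) by lia. ring.
Qed.

Lemma RmK_restr k xs y1 y2 a b : Forall (fun z => (z < m)%nat) xs ->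
  (y1 < m)%nat -> (y2 < m)%nat -> (a < m)%nat -> (b < m)%nat ->
  RmK q' m (restr q q' c) k xs y1 y2 a b = RmK q m c k xs y1 y2 a b.
Proof.
  revert xs y1 y2 a b. induction k; intros xs y1 y2 a b Hxs Hy1 Hy2 Ha Hb; simpl.
  - apply Rm0_restr; auto.
  - destruct xs as [|x xs]; [reflexivity|]. inversion Hxs; subst.
    replace (Lam q' m (restr q q' c) x) with (Lam q m c x)
      by (do 2 (apply functional_extensionality; intro); symmetry; apply Lam_restr).
    apply deriv_ext; auto.
Qed.

End Restriction.

(** * Algebraic convergence implies infinitesimal convergence *)

Lemma Rinv_INR_S_le k b : (k <= b)%nat -> / INR (S b) <= / INR (S k).
Proof. intros H. apply Rinv_le_contravar; [apply lt_0_INR; lia | apply le_INR; lia]. Qed.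

(* For each [n], take an approximant that is [1/(k+1)]-close for the best
   [k <= n] attainable at [n]; this choice works for every precision. *)
Lemma approximants_choice (D : Type) (good : D -> Prop) (close : nat -> D -> R -> Prop) :
  (forall n d e e', close n d e -> e <= e' -> close n d e') ->
  (forall eps, eps > 0 -> exists N, forall n, (N <= n)%nat -> exists d, good d /\ close n d eps) ->
  exists f : nat -> D, (forall n, good (f n)) /\
    forall eps, eps > 0 -> exists N, forall n, (N <= n)%nat -> close n (f n) eps.
Proof.
  intros Hmono Happrox.
  set (attainable n k := exists d, good d /\ close n d (/ INR (S k))).
  assert (Hbest : forall n b, exists d, good d /\
            forall k, (k < b)%nat -> attainable n k -> close n d (/ INR (S k))).
  { intros n b. induction b as [|b [d [Hd Hclose]]].
    - destruct (Happrox 1 Rlt_0_1) as [N HN]. destruct (HN N (le_n N)) as [d [Hd _]].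
      exists d. split; [exact Hd | intros; lia].
    - destruct (classic (attainable n b)) as [[d' [Hd' Hclose']] | Hno].
      + exists d'. split; [exact Hd'|]. intros k Hk _.
        apply Hmono with (/ INR (S b)); [exact Hclose' | apply Rinv_INR_S_le; lia].
      + exists d. split; [exact Hd|]. intros k Hk Hk'.
        destruct (Nat.eq_dec k b) as [->|]; [contradiction | apply Hclose; auto; lia]. }
  destruct (functional_choice (fun n d => good d /\
     forall k, (k < S n)%nat -> attainable n k -> close n d (/ INR (S k))) (fun n => Hbest n (S n)))
    as [f Hf].
  exists f. split; [intros n; apply Hf|]. intros eps Heps.
  destruct (archimed_cor1 eps Heps) as [N [HN HNpos]].
  assert (Hpos : / INR N > 0) by (apply Rinv_0_lt_compat, lt_0_INR; lia).
  destruct (Happrox _ Hpos) as [N0 HN0].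
  exists (Nat.max N0 N). intros n Hn.
  apply Hmono with (/ INR N); [|lra].
  replace N with (S (pred N)) by lia. apply Hf; [lia|].
  unfold attainable. replace (S (pred N)) with N by lia. apply HN0. lia.
Qed.

Lemma convV_choice q m mus mu : convV q m mus mu ->
  exists A Ai Bs : nat -> nat -> nat -> R,
    (forall n, IsGL q (A n) (Ai n) /\ IsO m (Bs n)) /\
    Br_cv q m (fun n => actG q m (A n) (Ai n) (Bs n) (mus n)) mu.
Proof.
  intros Hcv.
  destruct (approximants_choice ((nat -> nat -> R) * (nat -> nat -> R) * (nat -> nat -> R))
    (fun g => IsGL q (fst (fst g)) (snd (fst g)) /\ IsO m (snd g))
    (fun n g e => forall i j k, (i < q + m)%nat -> (j < q + m)%nat -> (k < q + m)%nat ->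
       Rabs (actG q m (fst (fst g)) (snd (fst g)) (snd g) (mus n) i j k - mu i j k) < e))
    as [g [Hg Hclose]].
  - intros n g e e' H He i j k Hi Hj Hk. specialize (H i j k Hi Hj Hk). lra.
  - intros eps Heps. destruct (Hcv eps Heps) as [N HN]. exists N. intros n Hn.
    destruct (HN n Hn) as (A & Ai & B & HA & HB & Happ). exists (A, Ai, B). auto.
  - exists (fun n => fst (fst (g n))), (fun n => snd (fst (g n))), (fun n => snd (g n)).
    split; [exact Hg|]. intros i j k Hi Hj Hk eps Heps.
    destruct (Hclose eps Heps) as [N HN]. exists N. intros n Hn. apply HN; auto.
Qed.

Lemma RmK_cv_basis_change q m mus mu A Ai Bs :
  (forall n, IsGL q (A n) (Ai n) /\ IsO m (Bs n)) ->
  Br_cv q m (fun n => actG q m (A n) (Ai n) (Bs n) (mus n)) mu ->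
  forall k xs y1 y2 a b, length xs = k -> Forall (fun z => (z < m)%nat) xs ->
  (y1 < m)%nat -> (y2 < m)%nat -> (a < m)%nat -> (b < m)%nat ->
  Un_cv (fun n => tact m (Bs n) (RmK q m (mus n) k) xs y1 y2 a b) (RmK q m mu k xs y1 y2 a b).
Proof.
  intros HG Hbr k xs y1 y2 a b Hl Hxs Hy1 Hy2 Ha Hb.
  apply Un_cv_ext with (fun n => RmK q m (actG q m (A n) (Ai n) (Bs n) (mus n)) k xs y1 y2 a b).
  - intros n. destruct (HG n). apply RmK_actG; auto.
  - apply RmK_cv; auto.
Qed.

Theorem alg_conv_inf_conv q m mus q' muinf :
  alg_conv q m mus q' muinf -> inf_conv q m mus q' muinf.
Proof.
  intros [[-> [_ Hcv]] | [Hq [_ (mut & _ & _ & _ & _ & Hcv & Hker & Hequiv)]]] s;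
    destruct (convV_choice _ _ _ _ Hcv) as (A & Ai & Bs & HG & Hbr).
  - exists Bs. split; [intros n; apply HG|].
    intros k xs y1 y2 a b _ Hl Hxs Hy1 Hy2 Ha Hb.
    apply (RmK_cv_basis_change q m mus muinf A Ai Bs); auto.
  - destruct Hequiv as (A0 & Ai0 & B0 & HA0 & HB0 & Hequiv).
    exists (fun n => mm m B0 (Bs n)). split; [intros n; apply IsO_mm; [exact HB0 | apply HG]|].
    intros k xs y1 y2 a b _ Hl Hxs Hy1 Hy2 Ha Hb.
    rewrite <- (RmK_ext q' m _ _ Hequiv), RmK_actG by auto.
    apply Un_cv_ext with (fun n => tact m B0 (tact m (Bs n) (RmK q m (mus n) k)) xs y1 y2 a b).
    { intros n. symmetry. apply tact_mm. }
    apply tact_cv. intros zs z1 z2 c d Hzl Hzs Hz1 Hz2 Hc Hd.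
    rewrite RmK_restr by (auto; lia).
    apply (RmK_cv_basis_change q m mus mut A Ai Bs); auto. congruence.
Qed.

(** * The converse fails *)

Lemma fsum_0 n : fsum n (fun _ => 0) = 0.
Proof. apply fsum_eq_0; auto. Qed.

(* Every term of [Rm0] and [deriv] contains a factor [mu(R^m, R^m)] or [Lam]. *)
Lemma RmK_eq_0 q m c : (forall x y z, c (q + x)%nat (q + y)%nat z = 0) ->
  forall k xs y1 y2 a b, RmK q m c k xs y1 y2 a b = 0.
Proof.
  intros Hc.
  assert (HLam : forall x a b, Lam q m c x a b = 0) by (intros; unfold Lam; rewrite !Hc; ring).
  intros [|k] xs y1 y2 a b; simpl.
  - unfold Rm0, mm. setoid_rewrite HLam. setoid_rewrite Hc.
    repeat setoid_rewrite Rmult_0_l. repeat setoid_rewrite Rmult_0_r. rewrite !fsum_0. ring.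
  - destruct xs as [|x xs]; [reflexivity|]. unfold deriv. setoid_rewrite HLam.
    repeat setoid_rewrite Rmult_0_l. repeat setoid_rewrite Rmult_0_r. rewrite !fsum_0. ring.
Qed.

Definition mu_abelian : Br := fun _ _ _ => 0.

(* [e0] rotates the translations [e1], [e2] of the plane. *)
Definition mu_euclid : Br := fun i j k =>
  match i, j, k with
  | O, 1%nat, 2%nat => 1 | O, 2%nat, 1%nat => -1
  | 1%nat, O, 2%nat => -1 | 2%nat, O, 1%nat => 1
  | _, _, _ => 0
  end.

Lemma mu_euclid_translations x y z : mu_euclid (1 + x)%nat (1 + y)%nat z = 0.
Proof. destruct x as [|[|x]], y as [|[|y]], z as [|[|[|z]]]; reflexivity. Qed.

Ltac nat_cases v := destruct v as [|[|[|v]]]; try lia.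

Lemma InH_mu_euclid : InH 1 2 mu_euclid.
Proof.
  split; [|split; [|split]].
  - split; [apply Nat.le_refl|].
    intros i j k Hi Hj Hk. nat_cases i; nat_cases j; nat_cases k; simpl; lra.
  - split; [|split].
    + intros i j k l Hi Hj Hk Hl. nat_cases i; nat_cases j; nat_cases k; nat_cases l; simpl; ring.
    + intros i j k Hi Hj Hk. nat_cases i; nat_cases j; nat_cases k; reflexivity.
    + intros i j k Hi Hj Hk. nat_cases i; nat_cases j; nat_cases k; reflexivity.
  - intros z x y Hz Hx Hy. nat_cases z; nat_cases x; nat_cases y; simpl; ring.
  - intros Z HZ i Hi. nat_cases i. specialize (HZ O 2%nat ltac:(lia) ltac:(lia)). simpl in HZ. lra.
Qed.

Lemma InH_mu_abelian : InH 0 2 mu_abelian.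
Proof.
  split; [|split; [|split]].
  - split; [apply Nat.le_0_l|]. intros i j k _ _ _. unfold mu_abelian. ring.
  - split; [|split].
    + intros i j k l _ _ _ _. unfold mu_abelian. simpl. ring.
    + intros i. lia.
    + intros i. lia.
  - intros z. lia.
  - intros Z _ i. lia.
Qed.

Theorem inf_conv_without_alg_conv :
  exists (m q : nat), (1 <= m)%nat /\ (q <= m * (m - 1) / 2)%nat /\
    exists (mus : nat -> Br) (q' : nat) (muinf : Br),
      (forall n, InH q m (mus n)) /\ InH q' m muinf /\
      inf_conv q m mus q' muinf /\ ~ alg_conv q m mus q' muinf.
Proof.
  exists 2%nat, 0%nat. split; [lia | split; [apply Nat.le_0_l|]].
  exists (fun _ => mu_abelian), 1%nat, mu_euclid.
  split; [intros; apply InH_mu_abelian|]. split; [apply InH_mu_euclid|]. split.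
  - intros s. exists (fun _ => kdelta). split; [intros; apply IsO_kdelta|].
    intros k xs y1 y2 a b _ _ _ _ _ _ _.
    rewrite RmK_eq_0 by apply mu_euclid_translations.
    apply Un_cv_ext with (fun _ => 0); [|apply Un_cv_const].
    intros n. symmetry. apply tact_eq_0. intros. apply RmK_eq_0. reflexivity.
  - intros [[H _] | [H _]]; lia.
Qed.

Theorem proposition3p5 :
  (forall (m q : nat), (1 <= m)%nat -> (q <= m * (m - 1) / 2)%nat ->
     forall (mus : nat -> Br) (q' : nat) (muinf : Br),
       (forall n, InH q m (mus n)) -> InH q' m muinf ->
       alg_conv q m mus q' muinf -> inf_conv q m mus q' muinf)
  /\
  (exists (m q : nat), (1 <= m)%nat /\ (q <= m * (m - 1) / 2)%nat /\
     exists (mus : nat -> Br) (q' : nat) (muinf : Br),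
       (forall n, InH q m (mus n)) /\ InH q' m muinf /\
       inf_conv q m mus q' muinf /\ ~ alg_conv q m mus q' muinf).
Proof.
  split.
  - intros m q _ _ mus q' muinf _ _. apply alg_conv_inf_conv.
  - exact inf_conv_without_alg_conv.
Qed.
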